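(* Let $a\in\mathbb Z_{>0}$, $b\in\mathbb Z$ with $a+b\ge1$. Let $z,q\in\mathbb C$, let $\alpha_1,\ldots,\alpha_m$ be words, and let $e_1,\ldots,e_m\in\mathbb Z_{\ge0}$. Then for every positive integer $k$, \[ S(k)=\sum_{n=1}^{k}z^n(an+b)^q\prod_{j=1}^{m}\mathcal H_{\alpha_j}(an+b)^{e_j} \] belongs to $\operatorname{span}_{\mathbb C}\{\mathcal H_\beta(ak+b)\}_\beta$, where $\beta$ ranges over words; i.e. $S(k)$ is a finite linear combination of generalized harmonic numbers with upper limit $ak+b$.
   Context: A letter is a pair $(r,s)\in\mathbb C^2$ and a word is a finite sequence of letters. For a word $\alpha=((r_1,s_1),\ldots,(r_d,s_d))$ and a positive integer $N$, \[ \mathcal H_{\alpha}(N)=\sum_{N\ge n_1>\cdots>n_d\ge1}\prod_{i=1}^{d}\frac{s_i^{n_i}}{n_i^{r_i}},\qquad \mathcal H_\emptyset(N)=1, \] with powers of positive integers defined by $n^r=\exp(r\log n)$ using the real logarithm (so $(an+b)^q$ uses the real logarithm of the positive integer $an+b$). *)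

From Stdlib Require Import Reals ZArith List.
From Coquelicot Require Import Coquelicot.
Import ListNotations.
Open Scope R_scope.

(* n^r := exp(r * ln n) for a positive integer n and complex r, with the real
   logarithm: exp((x+iy) ln n) = exp(x ln n) (cos(y ln n) + i sin(y ln n)). *)
Definition npow (n : nat) (r : C) : C :=
  (exp (fst r * ln (INR n)) * cos (snd r * ln (INR n)),
   exp (fst r * ln (INR n)) * sin (snd r * ln (INR n))).

Definition letter := (C * C)%type.
Definition word := list letter.

Fixpoint csum1 (N : nat) (f : nat -> C) : C :=
  match N with
  | O => RtoC 0
  | S N' => Cplus (csum1 N' f) (f (S N'))
  end.

(* H_alpha(N) = sum_{N >= n_1 > ... > n_d >= 1} prod_i s_i^{n_i} / n_i^{r_i},
   computed recursively on the first letter: H_[] = 1,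
   H_{(r,s)::alpha}(N) = sum_{n=1}^{N} s^n / n^r * H_alpha(n-1). *)
Fixpoint H (alpha : word) (N : nat) : C :=
  match alpha with
  | [] => RtoC 1
  | (r, s) :: alpha' =>
      csum1 N (fun n => Cmult (Cdiv (Cpow s n) (npow n r)) (H alpha' (n - 1)))
  end.

Fixpoint cprod (m : nat) (g : nat -> C) : C :=
  match m with
  | O => RtoC 1
  | S m' => Cmult (cprod m' g) (g m')
  end.

Fixpoint lincomb (l : list (C * word)) (N : nat) : C :=
  match l with
  | [] => RtoC 0
  | (c, beta) :: l' => Cplus (Cmult c (H beta N)) (lincomb l' N)
  end.

Definition Ssum (a b : Z) (z q : C) (m : nat) (alpha : nat -> word)
  (e : nat -> nat) (k : nat) : C :=
  csum1 k (fun n =>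
    let N := Z.to_nat (a * Z.of_nat n + b)%Z in
    Cmult (Cmult (Cpow z n) (npow N q))
          (cprod m (fun j => Cpow (H (alpha j) N) (e j)))).

(* Let V ([Hspan]) be the span of the functions N |-> H_beta(N), and W ([Hsummand])
   the span of the summands n |-> s^n n^(-r) f(n-1) with f in V.  Partial sums of
   elements of W lie in V (prepend the letter (r,s) to each word), W contains V and
   is stable under multiplication by c t^n and by n^q, and V is closed under
   products by the quasi-shuffle identity for nested sums.
   Write a n + b = A (n-1) + B, pick w with w^A = z and a primitive A-th root of
   unity om.  The exponential polynomial phi(N) = (1/A) sum_j (om^j w)^(N-B) equals
   z^((N-B)/A) on the progression N = B mod A and vanishes off it, hence
   S(k) = z (sum_{N <= a k + b} phi(N) N^q prod_j H_(alpha_j)(N)^(e_j) - const),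
   and the summand phi(N) N^q prod_j ... lies in W. *)

From Stdlib Require Import Reals ZArith List Lra Lia.
From Coquelicot Require Import Coquelicot.
Import ListNotations.
Open Scope C_scope.

Lemma npow_neq0 (n : nat) (r : C) : npow n r <> 0.
Proof.
  unfold npow. intros E. injection E as Hre Him.
  pose proof (exp_pos (fst r * ln (INR n))) as Hexp.
  pose proof (sin2_cos2 (snd r * ln (INR n))) as Hpyth. unfold Rsqr in Hpyth.
  apply Rmult_integral in Hre as [Hre | Hre]; [lra |].
  apply Rmult_integral in Him as [Him | Him]; [lra |].
  rewrite Hre, Him in Hpyth. lra.
Qed.

Lemma npow_plus (n : nat) (r1 r2 : C) : npow n (r1 + r2) = npow n r1 * npow n r2.
Proof.
  destruct r1 as [x1 y1], r2 as [x2 y2]. unfold npow, Cmult; simpl.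
  rewrite !Rmult_plus_distr_r, exp_plus, cos_plus, sin_plus.
  f_equal; ring.
Qed.

Lemma npow_0 (n : nat) : npow n 0 = 1.
Proof.
  unfold npow; simpl. rewrite !Rmult_0_l, exp_0, cos_0, sin_0.
  unfold RtoC; f_equal; ring.
Qed.

Lemma csum1_ext (N : nat) (f g : nat -> C) :
  (forall n, (1 <= n <= N)%nat -> f n = g n) -> csum1 N f = csum1 N g.
Proof.
  induction N as [|N IH]; intros Hfg; simpl; auto.
  f_equal; [apply IH; intros; apply Hfg | apply Hfg]; lia.
Qed.

Lemma csum1_S (N : nat) (f : nat -> C) : csum1 (S N) f = csum1 N f + f (S N).
Proof. reflexivity. Qed.

Lemma csum1_zero (N : nat) : csum1 N (fun _ => 0) = 0.
Proof. induction N as [|N IH]; simpl; [| rewrite IH]; ring. Qed.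

Lemma csum1_plus (N : nat) (f g : nat -> C) :
  csum1 N (fun n => f n + g n) = csum1 N f + csum1 N g.
Proof. induction N as [|N IH]; simpl; [| rewrite IH]; ring. Qed.

Lemma csum1_scal (N : nat) (c : C) (f : nat -> C) :
  csum1 N (fun n => c * f n) = c * csum1 N f.
Proof. induction N as [|N IH]; simpl; [| rewrite IH]; ring. Qed.

Lemma csum1_const (N : nat) (c : C) : csum1 N (fun _ => c) = INR N * c.
Proof.
  induction N as [|N IH]; simpl csum1; [simpl; ring |].
  rewrite IH, S_INR, RtoC_plus. ring.
Qed.

Lemma csum1_split (M d : nat) (f : nat -> C) :
  csum1 (M + d) f = csum1 M f + csum1 d (fun j => f (M + j)%nat).
Proof.
  induction d as [|d IH]; simpl.
  - rewrite Nat.add_0_r. ring.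
  - rewrite Nat.add_succ_r. simpl. rewrite IH. ring.
Qed.

Lemma csum1_last (N : nat) (f : nat -> C) :
  (forall n, (1 <= n <= N)%nat -> f n = 0) -> csum1 (S N) f = f (S N).
Proof.
  intros Hf. simpl. rewrite (csum1_ext N f (fun _ => 0)) by auto.
  rewrite csum1_zero. ring.
Qed.

Lemma csum1_mul (N : nat) (f g : nat -> C) :
  csum1 N f * csum1 N g =
  csum1 N (fun n => f n * csum1 (n - 1) g + csum1 (n - 1) f * g n + f n * g n).
Proof.
  induction N as [|N IH]; simpl csum1; [ring |].
  rewrite Nat.sub_0_r, <- IH. ring.
Qed.

Lemma csum1_geom (N : nat) (x : C) :
  (x - 1) * csum1 N (fun j => Cpow x j) = Cpow x (S N) - x.
Proof.
  induction N as [|N IH]; simpl csum1; [simpl; ring |].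
  rewrite Cmult_plus_distr_l, IH, !Cpow_S. ring.
Qed.

Inductive Hspan : (nat -> C) -> Prop :=
  | Hspan_H (beta : word) : Hspan (H beta)
  | Hspan_zero : Hspan (fun _ => 0)
  | Hspan_add (f g : nat -> C) : Hspan f -> Hspan g -> Hspan (fun N => f N + g N)
  | Hspan_scal (c : C) (f : nat -> C) : Hspan f -> Hspan (fun N => c * f N)
  | Hspan_ext (f g : nat -> C) : (forall N, f N = g N) -> Hspan f -> Hspan g.

Lemma Hspan_const (c : C) : Hspan (fun _ => c).
Proof.
  refine (Hspan_ext _ _ _ (Hspan_scal c _ (Hspan_H []))).
  intros N. simpl. ring.
Qed.

Lemma lincomb_app (l1 l2 : list (C * word)) (N : nat) :
  lincomb (l1 ++ l2) N = lincomb l1 N + lincomb l2 N.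
Proof. induction l1 as [|[c beta] l1 IH]; simpl; [| rewrite IH]; ring. Qed.

Lemma lincomb_scal (c : C) (l : list (C * word)) (N : nat) :
  lincomb (map (fun p => (c * fst p, snd p)) l) N = c * lincomb l N.
Proof. induction l as [|[d beta] l IH]; simpl; [| rewrite IH]; ring. Qed.

Lemma Hspan_lincomb (f : nat -> C) :
  Hspan f -> exists l : list (C * word), forall N, f N = lincomb l N.
Proof.
  induction 1 as [beta | | f g _ [l1 Hf] _ [l2 Hg] | c f _ [l Hf] | f g Hfg _ [l Hf]].
  - exists [(RtoC 1, beta)]. intros N. simpl. ring.
  - exists []. reflexivity.
  - exists (l1 ++ l2). intros N. rewrite lincomb_app, Hf, Hg. reflexivity.
  - exists (map (fun p => (c * fst p, snd p)) l). intros N.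
    rewrite lincomb_scal, Hf. reflexivity.
  - exists l. intros N. rewrite <- Hfg. apply Hf.
Qed.

Inductive Hsummand : (nat -> C) -> Prop :=
  | Hsummand_term (r s : C) (f : nat -> C) :
      Hspan f -> Hsummand (fun n => Cpow s n / npow n r * f (n - 1)%nat)
  | Hsummand_add (f g : nat -> C) :
      Hsummand f -> Hsummand g -> Hsummand (fun n => f n + g n)
  (* only [n >= 1] matters: partial sums never sample [n = 0], where [n - 1]
     truncates *)
  | Hsummand_ext (f g : nat -> C) :
      (forall n, (1 <= n)%nat -> f n = g n) -> Hsummand f -> Hsummand g.

Lemma Hspan_csum1_term (r s : C) (f : nat -> C) :
  Hspan f -> Hspan (fun N => csum1 N (fun n => Cpow s n / npow n r * f (n - 1)%nat)).
Proof.
  induction 1 as [beta | | f g _ IHf _ IHg | c f _ IH | f g Hfg _ IH].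
  - exact (Hspan_H ((r, s) :: beta)).
  - refine (Hspan_ext _ _ _ Hspan_zero).
    intros N. rewrite <- (csum1_zero N) at 1. apply csum1_ext. intros. ring.
  - refine (Hspan_ext _ _ _ (Hspan_add _ _ IHf IHg)).
    intros N. rewrite <- csum1_plus. apply csum1_ext. intros. ring.
  - refine (Hspan_ext _ _ _ (Hspan_scal c _ IH)).
    intros N. rewrite <- csum1_scal. apply csum1_ext. intros. ring.
  - refine (Hspan_ext _ _ _ IH).
    intros N. apply csum1_ext. intros n _. rewrite Hfg. reflexivity.
Qed.

Lemma Hspan_csum1 (g : nat -> C) : Hsummand g -> Hspan (fun N => csum1 N g).
Proof.
  induction 1 as [r s f Hf | f g _ IHf _ IHg | f g Hfg _ IH].
  - exact (Hspan_csum1_term r s f Hf).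
  - refine (Hspan_ext _ _ _ (Hspan_add _ _ IHf IHg)).
    intros N. symmetry. apply csum1_plus.
  - refine (Hspan_ext _ _ _ IH).
    intros N. apply csum1_ext. intros n Hn. apply Hfg. lia.
Qed.

Lemma Hsummand_scal_geom (c t : C) (f : nat -> C) :
  Hsummand f -> Hsummand (fun n => c * Cpow t n * f n).
Proof.
  induction 1 as [r s f Hf | f g _ IHf _ IHg | f g Hfg _ IH].
  - refine (Hsummand_ext _ _ _ (Hsummand_term r (s * t) _ (Hspan_scal c f Hf))).
    intros n _. cbn beta. rewrite Cpow_mult_l. field. apply npow_neq0.
  - refine (Hsummand_ext _ _ _ (Hsummand_add _ _ IHf IHg)).
    intros n _. ring.
  - refine (Hsummand_ext _ _ _ IH). intros n Hn. rewrite Hfg by exact Hn. reflexivity.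
Qed.

Lemma Hsummand_mul_npow (q : C) (f : nat -> C) :
  Hsummand f -> Hsummand (fun n => npow n q * f n).
Proof.
  induction 1 as [r s f Hf | f g _ IHf _ IHg | f g Hfg _ IH].
  - refine (Hsummand_ext _ _ _ (Hsummand_term (r - q) s _ Hf)).
    intros n _. cbn beta.
    replace (npow n r) with (npow n (r - q) * npow n q) by (rewrite <- npow_plus; f_equal; ring).
    field. split; apply npow_neq0.
  - refine (Hsummand_ext _ _ _ (Hsummand_add _ _ IHf IHg)).
    intros n _. ring.
  - refine (Hsummand_ext _ _ _ IH). intros n Hn. rewrite Hfg by exact Hn. reflexivity.
Qed.

Lemma Hsummand_scal (c : C) (f : nat -> C) : Hsummand f -> Hsummand (fun n => c * f n).
Proof.
  intros Hf. refine (Hsummand_ext _ _ _ (Hsummand_scal_geom c 1 f Hf)).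
  intros n _. rewrite Cpow_1_l. ring.
Qed.

Lemma Hsummand_zero : Hsummand (fun _ => 0).
Proof.
  refine (Hsummand_ext _ _ _ (Hsummand_term 0 0 _ Hspan_zero)).
  intros n _. ring.
Qed.

Lemma Hsummand_csum1 (A : nat) (G : nat -> nat -> C) :
  (forall j, Hsummand (G j)) -> Hsummand (fun n => csum1 A (fun j => G j n)).
Proof.
  intros HG. induction A as [|A IH]; simpl.
  - exact Hsummand_zero.
  - exact (Hsummand_add _ _ IH (HG (S A))).
Qed.

(* For [n >= 1], [H beta n] is [1^n / n^0 * H beta (n - 1)] plus the last summand
   of its defining sum. *)
Lemma Hsummand_H (beta : word) : Hsummand (H beta).
Proof.
  assert (Hprev : Hsummand (fun n => H beta (n - 1)%nat)).
  { refine (Hsummand_ext _ _ _ (Hsummand_term 0 1 _ (Hspan_H beta))).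
    intros n _. rewrite Cpow_1_l, npow_0. field. }
  destruct beta as [|[r s] beta']; [exact Hprev |].
  refine (Hsummand_ext _ _ _ (Hsummand_add _ _ Hprev (Hsummand_term r s _ (Hspan_H beta')))).
  intros [|n] Hn; [lia |]. simpl. rewrite !Nat.sub_0_r. reflexivity.
Qed.

Lemma Hsummand_of_Hspan (f : nat -> C) : Hspan f -> Hsummand f.
Proof.
  induction 1 as [beta | | f g _ IHf _ IHg | c f _ IH | f g Hfg _ IH].
  - apply Hsummand_H.
  - exact Hsummand_zero.
  - exact (Hsummand_add _ _ IHf IHg).
  - exact (Hsummand_scal c f IH).
  - refine (Hsummand_ext _ _ _ IH). intros n _. apply Hfg.
Qed.

Lemma H_cons (r s : C) (alpha : word) (N : nat) :
  H ((r, s) :: alpha) N = csum1 N (fun n => Cpow s n / npow n r * H alpha (n - 1)%nat).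
Proof. reflexivity. Qed.

(* The quasi-shuffle (stuffle) identity: split the product of the two outer
   sums according to n < n', n > n' or n = n'. *)
Lemma H_cons_mul (r s r' s' : C) (alpha beta : word) (N : nat) :
  H ((r, s) :: alpha) N * H ((r', s') :: beta) N =
  csum1 N (fun n =>
    Cpow s n / npow n r * (H alpha (n - 1)%nat * H ((r', s') :: beta) (n - 1)%nat) +
    Cpow s' n / npow n r' * (H ((r, s) :: alpha) (n - 1)%nat * H beta (n - 1)%nat) +
    Cpow (s * s') n / npow n (r + r') * (H alpha (n - 1)%nat * H beta (n - 1)%nat)).
Proof.
  rewrite !H_cons, csum1_mul. apply csum1_ext. intros n _.
  rewrite <- !H_cons, Cpow_mult_l, npow_plus. field. split; apply npow_neq0.
Qed.

Lemma Hspan_mul_H (alpha beta : word) : Hspan (fun N => H alpha N * H beta N).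
Proof.
  revert beta. induction alpha as [|[r s] alpha' IHalpha]; intros beta.
  - refine (Hspan_ext _ _ _ (Hspan_H beta)). intros N. simpl. ring.
  - induction beta as [|[r' s'] beta' IHbeta].
    + refine (Hspan_ext _ _ _ (Hspan_H ((r, s) :: alpha'))). intros N. simpl. ring.
    + refine (Hspan_ext _ _ (fun N => eq_sym (H_cons_mul r s r' s' alpha' beta' N)) _).
      apply Hspan_csum1. repeat apply Hsummand_add.
      * exact (Hsummand_term r s _ (IHalpha ((r', s') :: beta'))).
      * exact (Hsummand_term r' s' _ IHbeta).
      * exact (Hsummand_term (r + r') (s * s') _ (IHalpha beta')).
Qed.

Lemma Hspan_mul (f g : nat -> C) : Hspan f -> Hspan g -> Hspan (fun N => f N * g N).
Proof.
  intros Hf Hg. revert f Hf.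
  induction 1 as [alpha | | f1 f2 _ IH1 _ IH2 | c f _ IH | f1 f2 Hf12 _ IH].
  - induction Hg as [beta | | g1 g2 _ IH1 _ IH2 | c g _ IH | g1 g2 Hg12 _ IH].
    + apply Hspan_mul_H.
    + refine (Hspan_ext _ _ _ Hspan_zero). intros N. ring.
    + refine (Hspan_ext _ _ _ (Hspan_add _ _ IH1 IH2)). intros N. ring.
    + refine (Hspan_ext _ _ _ (Hspan_scal c _ IH)). intros N. ring.
    + refine (Hspan_ext _ _ _ IH). intros N. rewrite Hg12. reflexivity.
  - refine (Hspan_ext _ _ _ Hspan_zero). intros N. ring.
  - refine (Hspan_ext _ _ _ (Hspan_add _ _ IH1 IH2)). intros N. ring.
  - refine (Hspan_ext _ _ _ (Hspan_scal c _ IH)). intros N. ring.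
  - refine (Hspan_ext _ _ _ IH). intros N. rewrite Hf12. reflexivity.
Qed.

Lemma Hspan_pow (f : nat -> C) (e : nat) : Hspan f -> Hspan (fun N => Cpow (f N) e).
Proof.
  intros Hf. induction e as [|e IH]; simpl.
  - apply Hspan_const.
  - exact (Hspan_mul _ _ Hf IH).
Qed.

Lemma Hspan_cprod_pow (m : nat) (alpha : nat -> word) (e : nat -> nat) :
  Hspan (fun N => cprod m (fun j => Cpow (H (alpha j) N) (e j))).
Proof.
  induction m as [|m IH]; simpl.
  - apply Hspan_const.
  - exact (Hspan_mul _ _ IH (Hspan_pow _ (e m) (Hspan_H (alpha m)))).
Qed.

Definition cis (th : R) : C := (cos th, sin th).

Lemma Cpow_cis (th : R) (n : nat) : Cpow (cis th) n = cis (INR n * th).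
Proof.
  induction n as [|n IH].
  - unfold cis. simpl. rewrite Rmult_0_l, cos_0, sin_0. reflexivity.
  - rewrite Cpow_S, IH, S_INR. unfold cis, Cmult. simpl.
    replace ((INR n + 1) * th)%R with (th + INR n * th)%R by ring.
    rewrite cos_plus, sin_plus. f_equal; ring.
Qed.

Lemma cis_2PI : cis (2 * PI) = 1.
Proof. unfold cis. rewrite cos_2PI, sin_2PI. reflexivity. Qed.

Lemma polar_form (z : C) : z <> 0 -> exists th, z = Cmod z * cis th.
Proof.
  intros Hz. assert (Hrho : (0 < Cmod z)%R) by (apply Cmod_gt_0; exact Hz).
  destruct z as [x y]. set (rho := Cmod (x, y)) in *.
  assert (Hrho2 : (rho ^ 2 = x ^ 2 + y ^ 2)%R) by apply Cmod2_alt.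
  set (u := (x / rho)%R).
  assert (Hx : x = (rho * u)%R) by (unfold u; field; lra).
  assert (Hu2 : (u ^ 2 <= 1)%R).
  { rewrite Hx in Hrho2. assert (0 < rho ^ 2)%R by nra. nra. }
  assert (Hu : (-1 <= u <= 1)%R) by (split; nra).
  assert (Hy : (rho * sqrt (1 - u²) = Rabs y)%R).
  { replace (1 - u²)%R with ((y / rho)²)
      by (unfold Rsqr; rewrite Hx in Hrho2; field_simplify_eq; nra).
    rewrite sqrt_Rsqr_abs, Rabs_div, (Rabs_pos_eq rho) by lra. field. lra. }
  exists (if Rle_dec 0 y then acos u else (- acos u)%R).
  unfold cis, Cmult. simpl. destruct (Rle_dec 0 y) as [Hy0 | Hy0].
  - rewrite cos_acos, sin_acos by exact Hu.
    f_equal; [lra |]. rewrite Hy, Rabs_pos_eq by exact Hy0. ring.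
  - rewrite cos_neg, sin_neg, cos_acos, sin_acos by exact Hu.
    f_equal; [lra |]. rewrite <- Ropp_mult_distr_r, Hy, Rabs_left by lra. ring.
Qed.

Lemma Cpow_root_exists (A : nat) (z : C) : (0 < A)%nat -> exists w, Cpow w A = z.
Proof.
  intros HA. destruct (Ceq_dec z 0) as [Hz | Hz].
  { exists 0. subst z. destruct A as [|A]; [lia |]. simpl. ring. }
  destruct (polar_form z Hz) as [th Hth].
  assert (HAr : INR A <> 0%R) by (apply not_0_INR; lia).
  exists (Rpower (Cmod z) (/ INR A) * cis (th / INR A)).
  rewrite Cpow_mult_l, <- RtoC_pow, <- Rpower_pow by (unfold Rpower; apply exp_pos).
  rewrite Cpow_cis, Rpower_mult, Rinv_l, Rpower_1 by (exact HAr || apply Cmod_gt_0, Hz).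
  replace (INR A * (th / INR A))%R with th by (field; exact HAr).
  symmetry. exact Hth.
Qed.

Lemma cos_lt_1 (t : R) : (0 < t < 2 * PI)%R -> (cos t < 1)%R.
Proof.
  intros Ht. replace t with (2 * (t / 2))%R by field.
  rewrite cos_2a_sin.
  assert (0 < sin (t / 2))%R by (apply sin_gt_0; lra).
  nra.
Qed.

Lemma root_of_unity_sum (A : nat) : (0 < A)%nat ->
  exists om : C, Cpow om A = 1 /\
    forall m, csum1 A (fun j => Cpow om (j * m)) = if (m mod A =? 0)%nat then INR A else 0.
Proof.
  intros HA. assert (HAr : (0 < INR A)%R) by (apply lt_0_INR; exact HA).
  exists (cis (2 * PI / INR A)).
  assert (HomA : Cpow (cis (2 * PI / INR A)) A = 1).
  { rewrite Cpow_cis. replace (INR A * (2 * PI / INR A))%R with (2 * PI)%R by (field; lra).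
    apply cis_2PI. }
  split; [exact HomA |]. intros m.
  set (x := Cpow (cis (2 * PI / INR A)) m).
  rewrite (csum1_ext A _ (fun j => Cpow x j))
    by (intros j _; unfold x; rewrite Nat.mul_comm, Cpow_mult_r; reflexivity).
  assert (Hx : x = Cpow (cis (2 * PI / INR A)) (m mod A)).
  { unfold x. rewrite (Nat.div_mod_eq m A) at 1.
    rewrite Cpow_add_r, Cpow_mult_r, HomA, Cpow_1_l. ring. }
  destruct (Nat.eqb_spec (m mod A) 0) as [Hm | Hm].
  - rewrite Hm in Hx. rewrite Hx, (csum1_ext A _ (fun _ => 1)) by (intros; apply Cpow_1_l).
    rewrite csum1_const. ring.
  - assert (Hx1 : x - 1 <> 0).
    { rewrite Hx, Cpow_cis. unfold cis. intros E. injection E as E _.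
      assert (Hlt : (0 < m mod A < A)%nat) by (pose proof (Nat.mod_upper_bound m A); lia).
      assert (Hr : (0 < INR (m mod A) < INR A)%R) by (split; [apply lt_0_INR | apply lt_INR]; lia).
      pose proof PI_RGT_0.
      assert (Hc : (cos (INR (m mod A) * (2 * PI / INR A)) < 1)%R).
      { apply cos_lt_1. split.
        - apply Rmult_lt_0_compat; [lra |]. apply Rdiv_lt_0_compat; lra.
        - apply (Rmult_lt_reg_r (INR A)); [lra |].
          replace (INR (m mod A) * (2 * PI / INR A) * INR A)%R
            with (INR (m mod A) * (2 * PI))%R by (field; lra).
          nra. }
      simpl in E. lra. }
    assert (HxA : Cpow x A = 1).
    { unfold x. rewrite <- Cpow_mult_r, Nat.mul_comm, Cpow_mult_r, HomA. apply Cpow_1_l. }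
    transitivity (/ (x - 1) * ((x - 1) * csum1 A (fun j => Cpow x j))); [field; exact Hx1 |].
    rewrite csum1_geom, Cpow_S, HxA. ring.
Qed.

(* Roots-of-unity filter: [t j = om^j w] and [c j = 1 / (A (t j)^B)], where [w^A = z]
   and [om] is a primitive [A]-th root of unity. *)
Lemma progression_indicator (A B : nat) (z : C) : (0 < A)%nat -> z <> 0 ->
  exists c t : nat -> C, forall i,
    csum1 A (fun j => c j * Cpow (t j) (B + i)) =
    if (i mod A =? 0)%nat then Cpow z (i / A) else 0.
Proof.
  intros HA Hz.
  destruct (Cpow_root_exists A z HA) as [w Hw].
  destruct (root_of_unity_sum A HA) as [om [HomA Hsum]].
  assert (Hroot_neq0 : forall x y, Cpow x A = y -> y <> 0 -> x <> 0).
  { intros x y Hxy Hy Hx. apply Hy. rewrite <- Hxy, Hx.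
    destruct A as [|A]; [lia |]. simpl. ring. }
  assert (Hw0 : w <> 0) by exact (Hroot_neq0 w z Hw Hz).
  assert (Hom0 : om <> 0) by (apply (Hroot_neq0 om 1 HomA); apply C1_nz).
  assert (HAr : RtoC (INR A) <> 0) by (intros E; injection E; apply not_0_INR; lia).
  exists (fun j => / (INR A * Cpow (Cpow om j * w) B)), (fun j => Cpow om j * w).
  intros i.
  rewrite (csum1_ext A _ (fun j => / INR A * Cpow w i * Cpow om (j * i))).
  2:{ intros j _. rewrite Cpow_add_r, Cpow_mult_r, (Cpow_mult_l (Cpow om j) w i).
      field. split; [exact HAr |].
      apply Cpow_nz, Cmult_neq_0; [apply Cpow_nz |]; assumption. }
  rewrite csum1_scal, Hsum.
  destruct (Nat.eqb_spec (i mod A) 0) as [Hi | Hi]; [| ring].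
  rewrite (Nat.div_mod_eq i A) at 1.
  rewrite Hi, Nat.add_0_r, Cpow_mult_r, Hw. field. exact HAr.
Qed.

Lemma csum1_progression (A B : nat) (h : nat -> C) : (0 < A)%nat -> (1 <= B)%nat ->
  (forall i, (i mod A <> 0)%nat -> h (B + i)%nat = 0) ->
  forall k, csum1 (A * k + B) h =
            csum1 (B - 1) h + csum1 (S k) (fun n => h (A * (n - 1) + B)%nat).
Proof.
  intros HA HB Hh k. induction k as [|k IH].
  - replace (A * 0 + B)%nat with (S (B - 1)) by lia.
    rewrite !csum1_S. simpl csum1.
    replace (A * (1 - 1) + B)%nat with (S (B - 1)) by lia. ring.
  - replace (A * S k + B)%nat with (A * k + B + S (A - 1))%nat by lia.
    rewrite csum1_split, csum1_last, IH, (csum1_S (S k)).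
    + replace (A * k + B + S (A - 1))%nat with (A * (S (S k) - 1) + B)%nat by lia. ring.
    + intros j Hj. replace (A * k + B + j)%nat with (B + (j + k * A))%nat by lia.
      apply Hh. rewrite Nat.Div0.mod_add, Nat.mod_small; lia.
Qed.

Lemma Hspan_progression_sum (A B : nat) (z : C) (F : nat -> C) :
  (0 < A)%nat -> (1 <= B)%nat -> Hsummand F ->
  exists G : nat -> C, Hspan G /\ forall k, (1 <= k)%nat ->
    csum1 k (fun n => Cpow z n * F (A * (n - 1) + B)%nat) = G (A * (k - 1) + B)%nat.
Proof.
  intros HA HB HF. destruct (Ceq_dec z 0) as [Hz | Hz].
  { exists (fun _ => 0). split; [exact Hspan_zero |]. intros k _.
    rewrite <- (csum1_zero k). apply csum1_ext. intros [|n] Hn; [lia |].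
    rewrite Hz, Cpow_S. ring. }
  destruct (progression_indicator A B z HA Hz) as [c [t Hct]].
  set (h := fun N => csum1 A (fun j => c j * Cpow (t j) N) * F N).
  assert (Hh : Hsummand h).
  { refine (Hsummand_ext _ _ _
      (Hsummand_csum1 A _ (fun j => Hsummand_scal_geom (c j) (t j) F HF))).
    intros n _. unfold h. rewrite Cmult_comm, <- csum1_scal.
    apply csum1_ext. intros. ring. }
  set (h0 := csum1 (B - 1) h).
  exists (fun N => z * (csum1 N h - h0)). split.
  - apply Hspan_scal.
    refine (Hspan_ext _ _ _ (Hspan_add _ _ (Hspan_csum1 h Hh) (Hspan_const (- h0)))).
    intros N. ring.
  - intros [|k] Hk; [lia |].
    replace (A * (S k - 1) + B)%nat with (A * k + B)%nat by lia.
    rewrite (csum1_progression A B h HA HB).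
    2:{ intros i Hi. unfold h. rewrite Hct.
        destruct (Nat.eqb_spec (i mod A) 0); [contradiction | ring]. }
    fold h0. transitivity (z * csum1 (S k) (fun n => h (A * (n - 1) + B)%nat)); [| ring].
    rewrite <- csum1_scal. apply csum1_ext. intros [|n] Hn; [lia |].
    unfold h. replace (A * (S n - 1) + B)%nat with (B + n * A)%nat by lia.
    rewrite Hct, Nat.Div0.mod_mul, Nat.div_mul by lia. simpl Nat.eqb.
    replace (B + n * A)%nat with (A * (S n - 1) + B)%nat by lia.
    rewrite Cpow_S. ring.
Qed.

Theorem theorem3p3 (a b : Z) (z q : C) (m : nat) (alpha : nat -> word)
  (e : nat -> nat) (Ha : (0 < a)%Z) (Hab : (1 <= a + b)%Z) :
  exists l : list (C * word),
    forall k : nat, (1 <= k)%nat ->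
      Ssum a b z q m alpha e k = lincomb l (Z.to_nat (a * Z.of_nat k + b)%Z).
Proof.
  set (A := Z.to_nat a). set (B := Z.to_nat (a + b)).
  assert (Hindex : forall n, (1 <= n)%nat ->
            Z.to_nat (a * Z.of_nat n + b) = (A * (n - 1) + B)%nat)
    by (intros; unfold A, B; nia).
  set (F := fun N => npow N q * cprod m (fun j => Cpow (H (alpha j) N) (e j))).
  assert (HF : Hsummand F)
    by exact (Hsummand_mul_npow q _ (Hsummand_of_Hspan _ (Hspan_cprod_pow m alpha e))).
  destruct (Hspan_progression_sum A B z F) as [G [HG HS]]; [lia | lia | exact HF |].
  destruct (Hspan_lincomb G HG) as [l Hl].
  exists l. intros k Hk.
  rewrite Hindex, <- Hl, <- HS by exact Hk.
  unfold Ssum. apply csum1_ext. intros n Hn. cbv zeta.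
  rewrite Hindex by lia. unfold F. ring.
Qed.
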